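(* Let $f_1,\dots,f_n:\mathbb{R}^d\to\mathbb{R}$ be convex and differentiable, each with $L$-Lipschitz gradient, with $f=\frac1n\sum_i f_i$ $\lambda$-strongly convex with minimizer $x^*$. Assume the sparsity structure and the asynchronous SVRG model described in the context, with staleness bound $\tau$ and sparsity constant $\Delta$. Suppose the step size $\eta>0$ and epoch size $m$ satisfy $2L^2\Delta\eta^2\tau^2<1$ and $$0<\theta_s:=\frac{\frac{1}{\lambda\eta m}+4L\,\frac{\eta+L\Delta\tau^2\eta^2}{1-2L^2\Delta\eta^2\tau^2}}{1-4L\,\frac{\eta+L\Delta\tau^2\eta^2}{1-2L^2\Delta\eta^2\tau^2}}<1,$$ with positive denominator. If the epoch-end selection probabilities are $p_j=1/m$ for all $j\in[m]$, then for every $k\ge0$, $$\mathbb{E}\big[f(\tilde x^{k+1})-f(x^* )\big]\le\theta_s\,\mathbb{E}\big[f(\tilde x^{k})-f(x^* )\big].$$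
   Context: Sparsity: each $f_i$ depends only on the coordinates of $x$ indexed by a set $e_i\subseteq[d]$. Write $\|x\|_i^2=\sum_{j\in e_i}x_j^2$, and let $\Delta$ be the smallest constant such that $\frac1n\sum_{i=1}^n\|x\|_i^2\le\Delta\|x\|^2$ for all $x\in\mathbb{R}^d$. Asynchronous SVRG model (consistent reads, bounded staleness, synchronization once per epoch): start from $x^0$, $\tilde x^0=x^0$. Epoch $k+1$ consists of global steps $t=km,\dots,km+m-1$, with $x^{km}=\tilde x^k$. At step $t$, an index $i_t$ is drawn uniformly from $[n]$, independently of all previous indices and iterates, and $$x^{t+1}=x^t+\eta u^t,\qquad u^t=-\big[\nabla f_{i_t}(x^{D(t)})-\nabla f_{i_t}(\tilde x^k)+\nabla f(\tilde x^k)\big],$$ where $D(t)$ is an integer (not depending on $i_t$) with $km\le D(t)\le t$ and $t-D(t)\le\tau$, for a fixed nonnegative integer $\tau$; i.e. the gradient is evaluated at a possibly stale earlier iterate, at most $\tau$ steps old and not older than the start of the current epoch. At the end of epoch $k+1$, $\tilde x^{k+1}$ is chosen at random from $\{x^{km},\dots,x^{km+m-1}\}$, selecting $x^{km+j-1}$ with probability $p_j$, and $x^{(k+1)m}:=\tilde x^{k+1}$. Expectations are over all random indices and selections. *)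

From Stdlib Require Import Reals.
From mathcomp Require Import all_boot.
Set Implicit Arguments. Unset Strict Implicit. Unset Printing Implicit Defensive.
Open Scope R_scope.

Definition vec (d : nat) := 'I_d -> R.

Definition dot {d} (x y : vec d) : R := \big[Rplus/0]_(j < d) (x j * y j).
Definition sqnorm {d} (x : vec d) : R := dot x x.
Definition sqnorm_on {d} (e : 'I_d -> bool) (x : vec d) : R :=
  \big[Rplus/0]_(j < d | e j) (x j * x j).
Definition vadd {d} (x y : vec d) : vec d := fun j => x j + y j.
Definition vsub {d} (x y : vec d) : vec d := fun j => x j - y j.
Definition vscale {d} (a : R) (x : vec d) : vec d := fun j => a * x j.

Definition rsum (n : nat) (F : nat -> R) : R := \big[Rplus/0]_(i < n) F i.

Definition favg {d} (n : nat) (fs : nat -> vec d -> R) (x : vec d) : R :=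
  / INR n * rsum n (fun i => fs i x).
Definition gavg {d} (n : nat) (gs : nat -> vec d -> vec d) (x : vec d) : vec d :=
  fun j => / INR n * rsum n (fun i => gs i x j).

Definition has_gradient {d} (f : vec d -> R) (g : vec d -> vec d) : Prop :=
  forall x eps, 0 < eps -> exists delta, 0 < delta /\
    forall h : vec d, sqrt (sqnorm h) < delta ->
      Rabs (f (vadd x h) - f x - dot (g x) h) <= eps * sqrt (sqnorm h).

Definition convex {d} (f : vec d -> R) : Prop :=
  forall x y t, 0 <= t <= 1 ->
    f (vadd (vscale t x) (vscale (1 - t) y)) <= t * f x + (1 - t) * f y.

Definition strongly_convex {d} (lam : R) (f : vec d -> R) : Prop :=
  forall x y t, 0 <= t <= 1 ->
    f (vadd (vscale t x) (vscale (1 - t) y))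
      <= t * f x + (1 - t) * f y - lam / 2 * t * (1 - t) * sqnorm (vsub x y).

Definition lipschitz_grad {d} (L : R) (g : vec d -> vec d) : Prop :=
  forall x y, sqrt (sqnorm (vsub (g x) (g y))) <= L * sqrt (sqnorm (vsub x y)).

Definition depends_only_on {d} (e : 'I_d -> bool) (f : vec d -> R) : Prop :=
  forall x y : vec d, (forall j, e j -> x j = y j) -> f x = f y.

Definition upd (g : nat -> nat) (t v : nat) : nat -> nat :=
  fun u => if (u == t)%N then v else g u.

(* expectation over i_0,...,i_{T-1} i.i.d. uniform on {0,...,n-1} *)
Fixpoint Eidx (n T : nat) (F : (nat -> nat) -> R) : R :=
  match T with
  | O => F (fun _ => 0%N)
  | S T' => / INR n * rsum n (fun i => Eidx n T' (fun g => F (upd g T' i)))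
  end.

(* expectation over selections s_0,...,s_{K-1} i.i.d. on {0,...,m-1},
   P(s = j) = p j  (s = j means x^{km+j} is selected, i.e. p_{j+1} in paper) *)
Fixpoint Esel (m : nat) (p : nat -> R) (K : nat) (G : (nat -> nat) -> R) : R :=
  match K with
  | O => G (fun _ => 0%N)
  | S K' => rsum m (fun s => p s * Esel m p K' (fun h => G (upd h K' s)))
  end.

(* expectation over all randomness of the first K epochs *)
Definition Exp (n m : nat) (p : nat -> R) (K : nat)
    (F : (nat -> nat) -> (nat -> nat) -> R) : R :=
  Esel m p K (fun sel => Eidx n (K * m)%N (fun idx => F idx sel)).

(* ---------- asynchronous SVRG trajectory ----------
   idx t = i_t, sel k = selection at the end of epoch k+1.
   D t hi hs = delay index D(t), allowed to depend on the past indices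
   [i_0..i_{t-1}] and past selections. *)
Section Traj.
Variables (d n m : nat) (gs : nat -> vec d -> vec d) (eta : R)
  (D : nat -> seq nat -> seq nat -> nat) (x0 : vec d)
  (idx sel : nat -> nat).

(* computes x^{t+1} from xs = [x^0; ...; x^t] *)
Definition svrg_step (t : nat) (xs : seq (vec d)) : vec d :=
  let k := (t %/ m)%N in
  let xtil := nth x0 xs (k * m)%N in
  if (t.+1 %% m == 0)%N then nth x0 xs (k * m + sel k)%N
  else
    let xd := nth x0 xs (D t (map idx (iota 0 t)) (map sel (iota 0 k))) in
    fun j => nth x0 xs t j
             + eta * (- (gs (idx t) xd j - gs (idx t) xtil j + gavg n gs xtil j)).

Fixpoint svrg_traj (t : nat) : seq (vec d) :=
  match t with
  | O => [:: x0]
  | S t' => rcons (svrg_traj t') (svrg_step t' (svrg_traj t'))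
  end.

Definition snapshot (k : nat) : vec d :=
  nth x0 (svrg_traj (k * m)%N) (k * m)%N.
End Traj.

From HB Require Import structures.
From Stdlib Require Import Reals Lra Lia Psatz FunctionalExtensionality.
From mathcomp Require Import all_boot zify.
Open Scope R_scope.
Set Implicit Arguments. Unset Strict Implicit.

(* Fix the snapshot selections of the first k epochs and average over the sampled
   indices.  Inside epoch k+1 the iterate moves by x_(t+1) = x_t + eta u_t, where u_t is
   an unbiased estimate of -grad f at a stale point xh_t.  The index i_t is independent of
   x_t, xh_t and the snapshot xt, so re-drawing it gives
     E|x_(t+1) - xstar|^2 <= E|x_t - xstar|^2 - 2 eta a_t + eta L Delta E|x_t - xh_t|^2
                             + eta^2 E|u_t|^2,
   with a_t = E f(x_t) - f(xstar); sparsity enters through the descent lemma restricted to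
   the support of each f_i.  Co-coercivity of the grad f_i bounds
     E|u_t|^2 <= 8 L a_t + 8 L A + 2 L^2 Delta E|x_t - xh_t|^2,  A = E f(xt) - f(xstar).
   The gap x_t - xh_t is a sum of at most tau steps, so by Cauchy-Schwarz the gaps summed
   over the epoch are at most tau^2 eta^2 sum_t E|u_t|^2.  Telescoping the first
   inequality over the epoch, using E|xt - xstar|^2 <= (2/lam) A, and eliminating the two
   auxiliary sums leaves (1/m) sum_t a_t <= theta A; the left-hand side is
   E f(xt^(k+1)) - f(xstar) because the next snapshot is a uniformly chosen epoch iterate. *)

Lemma Rplus_associative : associative Rplus.
Proof. by move=> a b c; rewrite Rplus_assoc. Qed.

HB.instance Definition _ :=
  Monoid.isComLaw.Build R 0 Rplus Rplus_associative Rplus_comm Rplus_0_l.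

(** * Finite sums of reals *)

Section SumR.
Variables (I : Type) (r : seq I) (P : pred I).

Lemma sumRD (F G : I -> R) :
  \big[Rplus/0]_(i <- r | P i) (F i + G i)
  = \big[Rplus/0]_(i <- r | P i) F i + \big[Rplus/0]_(i <- r | P i) G i.
Proof. exact: big_split. Qed.

Lemma sumRZ c (F : I -> R) :
  \big[Rplus/0]_(i <- r | P i) (c * F i) = c * \big[Rplus/0]_(i <- r | P i) F i.
Proof.
by apply: (big_ind2 (fun a b => a = c * b)) => [|a b a' b' -> ->|]; rewrite //; ring.
Qed.

Lemma sumRN (F : I -> R) :
  \big[Rplus/0]_(i <- r | P i) (- F i) = - \big[Rplus/0]_(i <- r | P i) F i.
Proof.
have -> : forall a, - a = -1 * a by move=> a; ring.
by rewrite -sumRZ; apply: eq_bigr => i _; ring.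
Qed.

Lemma sumRB (F G : I -> R) :
  \big[Rplus/0]_(i <- r | P i) (F i - G i)
  = \big[Rplus/0]_(i <- r | P i) F i - \big[Rplus/0]_(i <- r | P i) G i.
Proof. by rewrite /Rminus -sumRN -sumRD. Qed.

Lemma ler_sumR (F G : I -> R) : (forall i, P i -> F i <= G i) ->
  \big[Rplus/0]_(i <- r | P i) F i <= \big[Rplus/0]_(i <- r | P i) G i.
Proof.
by move=> FG; apply: (big_ind2 (fun a b => a <= b)) => // *; lra.
Qed.

Lemma sumR_ge0 (F : I -> R) : (forall i, P i -> 0 <= F i) ->
  0 <= \big[Rplus/0]_(i <- r | P i) F i.
Proof. by move=> F0; apply: (big_ind (fun a => 0 <= a)) => // *; lra. Qed.
End SumR.

Section Rsum.
Implicit Types (n : nat) (F G : nat -> R).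

Lemma rsumD n F G : rsum n (fun i => F i + G i) = rsum n F + rsum n G.
Proof. exact: sumRD. Qed.

Lemma rsumZ n c F : rsum n (fun i => c * F i) = c * rsum n F.
Proof. exact: sumRZ. Qed.

Lemma rsumB n F G : rsum n (fun i => F i - G i) = rsum n F - rsum n G.
Proof. exact: sumRB. Qed.

Lemma ler_rsum n F G : (forall i, (i < n)%N -> F i <= G i) -> rsum n F <= rsum n G.
Proof. by move=> FG; apply: ler_sumR => i _; apply: FG. Qed.

Lemma rsum_ge0 n F : (forall i, (i < n)%N -> 0 <= F i) -> 0 <= rsum n F.
Proof. by move=> F0; apply: sumR_ge0 => i _; apply: F0. Qed.

Lemma eq_rsum n F G : (forall i, (i < n)%N -> F i = G i) -> rsum n F = rsum n G.
Proof. by move=> FG; apply: eq_bigr => i _; apply: FG. Qed.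

Lemma rsum0 F : rsum 0 F = 0.
Proof. by rewrite /rsum big_ord0. Qed.

Lemma rsumS n F : rsum n.+1 F = rsum n F + F n.
Proof. by rewrite /rsum big_ord_recr. Qed.

Lemma rsum_const n c : rsum n (fun _ => c) = INR n * c.
Proof. by elim: n => [|n IH]; rewrite ?rsum0 ?rsumS ?IH ?S_INR /=; ring. Qed.

Lemma exchange_rsum n1 n2 (F : nat -> nat -> R) :
  rsum n1 (fun i => rsum n2 (F i)) = rsum n2 (fun j => rsum n1 (F^~ j)).
Proof. exact: exchange_big. Qed.

Lemma ler_rsum_range n1 n2 F : (n1 <= n2)%N ->
  (forall i, (i < n2)%N -> 0 <= F i) -> rsum n1 F <= rsum n2 F.
Proof.
elim: n2 => [|n2 IH]; first by rewrite leqn0 => /eqP -> _; lra.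
rewrite leq_eqVlt => /orP [/eqP -> _|lt F0]; first lra.
rewrite rsumS; have := F0 n2 (ltnSn _); have := IH lt (fun i Hi => F0 i (ltnW Hi)).
lra.
Qed.
End Rsum.

(** * Euclidean geometry of [vec d] *)

Section Vectors.
Variable d : nat.
Implicit Types (a b z : vec d) (c : R).

Lemma eq_dot a b a' b' : (forall j, a j * b j = a' j * b' j) -> dot a b = dot a' b'.
Proof. by move=> E; apply: eq_bigr => j _; apply: E. Qed.

Lemma eq_sqnorm a b : (forall j, a j = b j) -> sqnorm a = sqnorm b.
Proof. by move=> E; apply: eq_dot => j; rewrite E. Qed.

Lemma dotC a b : dot a b = dot b a.
Proof. by apply: eq_dot => j; ring. Qed.

Lemma dotDl a b z : dot (fun j => a j + b j) z = dot a z + dot b z.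
Proof. by rewrite /dot -sumRD; apply: eq_bigr => j _; ring. Qed.

Lemma dotBl a b z : dot (fun j => a j - b j) z = dot a z - dot b z.
Proof. by rewrite /dot -sumRB; apply: eq_bigr => j _; ring. Qed.

Lemma dotZl c a z : dot (fun j => c * a j) z = c * dot a z.
Proof. by rewrite /dot -sumRZ; apply: eq_bigr => j _; ring. Qed.

Lemma dotDr a b z : dot z (fun j => a j + b j) = dot z a + dot z b.
Proof. by rewrite dotC dotDl !(dotC z). Qed.

Lemma dotBr a b z : dot z (fun j => a j - b j) = dot z a - dot z b.
Proof. by rewrite dotC dotBl !(dotC z). Qed.

Lemma dotZr c a z : dot z (fun j => c * a j) = c * dot z a.
Proof. by rewrite dotC dotZl dotC. Qed.

Lemma sqnorm_ge0 a : 0 <= sqnorm a.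
Proof. by apply: sumR_ge0 => j _; nra. Qed.

Lemma sqnorm_on_ge0 e a : 0 <= sqnorm_on e a.
Proof. by apply: sumR_ge0 => j _; nra. Qed.

Lemma sqnormD a b : sqnorm (fun j => a j + b j) = sqnorm a + 2 * dot a b + sqnorm b.
Proof. by rewrite /sqnorm dotDl !dotDr (dotC b a); ring. Qed.

Lemma sqnormB a b : sqnorm (fun j => a j - b j) = sqnorm a - 2 * dot a b + sqnorm b.
Proof. by rewrite /sqnorm dotBl !dotBr (dotC b a); ring. Qed.

Lemma sqnormZ c a : sqnorm (fun j => c * a j) = c ^ 2 * sqnorm a.
Proof. by rewrite /sqnorm dotZl dotZr; ring. Qed.

Lemma sqnormN a : sqnorm (fun j => - a j) = sqnorm a.
Proof. by apply: eq_dot => j; ring. Qed.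

Lemma sqnorm_subC a b : sqnorm (fun j => a j - b j) = sqnorm (fun j => b j - a j).
Proof. by rewrite -sqnormN; apply: eq_sqnorm => j; ring. Qed.

Lemma young_dot s a b : 0 < s -> 2 * dot a b <= s * sqnorm a + / s * sqnorm b.
Proof.
move=> s_gt0; have := sqnorm_ge0 (fun j => s * a j - b j).
rewrite sqnormB sqnormZ dotZl => H.
have -> : s * sqnorm a + / s * sqnorm b
          = 2 * dot a b + / s * (s ^ 2 * sqnorm a - 2 * (s * dot a b) + sqnorm b)
  by field; lra.
have : 0 <= / s * (s ^ 2 * sqnorm a - 2 * (s * dot a b) + sqnorm b).
  by apply: Rmult_le_pos => //; apply/Rlt_le/Rinv_0_lt_compat.
lra.
Qed.

Lemma sqnormD_le a b : sqnorm (fun j => a j + b j) <= 2 * sqnorm a + 2 * sqnorm b.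
Proof. by rewrite sqnormD; have := young_dot a b Rlt_0_1; rewrite Rinv_1; lra. Qed.

Lemma sqr_coord_le_sqnorm a (j : 'I_d) : a j * a j <= sqnorm a.
Proof.
rewrite /sqnorm /dot (bigD1 j) //= -[X in X <= _]Rplus_0_r.
by apply/Rplus_le_compat_l/sumR_ge0 => i _; nra.
Qed.

Lemma sqnorm_eq0 a : sqnorm a = 0 -> forall j, a j = 0.
Proof. by move=> a0 j; have := sqr_coord_le_sqnorm a j; nra. Qed.

Lemma sqrt_sqnormZ c a : sqrt (sqnorm (fun j => c * a j)) = Rabs c * sqrt (sqnorm a).
Proof.
rewrite sqnormZ sqrt_mult_alt; last exact: pow2_ge_0.
by rewrite -Rsqr_pow2 sqrt_Rsqr_abs.
Qed.
End Vectors.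

(** * Elementary estimates for sums over an epoch *)

Lemma sqnorm_telescope_le d (Z : nat -> vec d) b q : (q <= b)%N ->
  sqnorm (fun j => Z b j - Z (b - q)%N j)
  <= INR q * rsum q (fun i => sqnorm (fun j => Z (b - i)%N j - Z (b - i.+1)%N j)).
Proof.
elim: q => [|q IH] q_le.
  by rewrite subn0 rsum0 Rmult_0_r; right; rewrite /sqnorm /dot big1 // => j _; ring.
rewrite rsumS S_INR.
set S := rsum q _ in IH *.
set v := fun j => Z b j - Z (b - q)%N j; set w := fun j => Z (b - q)%N j - Z (b - q.+1)%N j.
have IHv : sqnorm v <= INR q * S := IH (ltnW q_le).
have S_ge0 : 0 <= S by apply: rsum_ge0 => i _; exact: sqnorm_ge0.
have w_ge0 : 0 <= sqnorm w := sqnorm_ge0 _.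
rewrite (@eq_sqnorm _ _ (fun j => v j + w j)) => [|j]; last by rewrite /v /w; ring.
rewrite sqnormD.
have [q0 | q_gt0] := posnP q.
  have v0 j : v j = 0 by rewrite /v q0 subn0; ring.
  have -> : dot v w = 0 by rewrite /dot big1 // => j _; rewrite v0; ring.
  have -> : sqnorm v = 0 by rewrite /sqnorm /dot big1 // => j _; rewrite v0; ring.
  by have := pos_INR q; nra.
have qr_gt0 : 0 < INR q by apply/lt_0_INR/ltP.
have := young_dot v w (Rinv_0_lt_compat _ qr_gt0); rewrite Rinv_inv.
have : / INR q * sqnorm v <= / INR q * (INR q * S).
  by apply: Rmult_le_compat_l => //; apply/Rlt_le/Rinv_0_lt_compat.
rewrite -Rmult_assoc Rinv_l ?Rmult_1_l; last lra.
lra.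
Qed.

Lemma rsum_shift (U : nat -> R) m j :
  rsum m (fun t => INR (j < t)%N * U (t - j.+1)%N) = rsum (m - j.+1) U.
Proof.
elim: m => [|m IH]; first by rewrite !rsum0.
rewrite rsumS IH; case: (ltnP j m) => jm /=.
  by rewrite (_ : m.+1 - j.+1 = (m - j.+1).+1)%N ?rsumS; [ring | lia].
by rewrite (_ : m.+1 - j.+1 = m - j.+1)%N; [ring | lia].
Qed.

(* each [U s] is counted at most [tau] times in the sliding windows of width [tau] *)
Lemma rsum_window_le (U : nat -> R) m tau : (forall s, (s < m)%N -> 0 <= U s) ->
  rsum m (fun t => rsum tau (fun j => INR (j < t)%N * U (t - j.+1)%N)) <= INR tau * rsum m U.
Proof.
move=> U_ge0; rewrite exchange_rsum -rsum_const.
by apply: ler_rsum => j _; rewrite rsum_shift; apply: ler_rsum_range => //; lia.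
Qed.

Lemma rsum_telescope_le (Q c : nat -> R) m : (0 < m)%N ->
  (forall t, (t.+1 < m)%N -> Q t.+1 <= Q t - c t) -> c m.-1 <= Q m.-1 ->
  rsum m c <= Q 0%N.
Proof.
move=> m_gt0 Q_step c_last.
have partial : forall t, (t < m)%N -> Q t + rsum t c <= Q 0%N.
  elim=> [|t IH] tm; first by rewrite rsum0; lra.
  by have := IH (ltnW tm); have := Q_step t tm; rewrite rsumS; lra.
have := partial m.-1 ltac:(lia).
by rewrite -{3}(prednK m_gt0) rsumS; lra.
Qed.

Lemma epoch_rate_algebra L Delta eta lam tau M Sa Su Ss A r0 :
  0 < L -> 0 <= Delta -> 0 < eta -> 0 < lam -> 0 < M -> 0 <= Su ->
  2 * L ^ 2 * Delta * eta ^ 2 * tau ^ 2 < 1 ->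
  let rho := 4 * L * ((eta + L * Delta * tau ^ 2 * eta ^ 2)
                      / (1 - 2 * L ^ 2 * Delta * eta ^ 2 * tau ^ 2)) in
  0 < 1 - rho ->
  Su <= 8 * L * Sa + 8 * L * (M * A) + 2 * L ^ 2 * Delta * Ss ->
  Ss <= tau * eta ^ 2 * (tau * Su) ->
  2 * eta * Sa - eta * L * Delta * Ss - eta ^ 2 * Su <= r0 ->
  r0 <= 2 / lam * A ->
  / M * Sa <= (/ (lam * eta * M) + rho) / (1 - rho) * A.
Proof.
move=> L_gt0 Delta_ge0 eta_gt0 lam_gt0 M_gt0 Su_ge0 stale_small rho rho_lt1 Su_le Ss_le r0_ge r0_le.
pose c := 1 - 2 * L ^ 2 * Delta * eta ^ 2 * tau ^ 2.
pose B := eta + L * Delta * tau ^ 2 * eta ^ 2.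
have rho_eq : rho = 4 * L * B / c by rewrite /rho /B /c /Rdiv; ring.
have LDtau_ge0 : 0 <= L * Delta * tau ^ 2 by apply: Rmult_le_pos; [nra | exact: pow2_ge_0].
have B_gt0 : 0 < B by rewrite /B; have := pow2_ge_0 eta; nra.
have c_pos : 0 < c by rewrite /c; lra.
(* eliminate the staleness sum [Ss] from both inequalities *)
have Su_bound : c * Su <= 8 * L * (Sa + M * A).
  have : 2 * L ^ 2 * Delta * Ss <= 2 * L ^ 2 * Delta * (tau * eta ^ 2 * (tau * Su)).
    by apply: Rmult_le_compat_l => //; have := pow2_ge_0 L; nra.
  rewrite /c; nra.
have Sa_bound : 2 * eta * Sa <= 2 / lam * A + eta * B * Su.
  have : eta * L * Delta * Ss <= eta * L * Delta * (tau * eta ^ 2 * (tau * Su)).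
    apply: Rmult_le_compat_l => //.
    by have := Rmult_le_pos _ _ (Rlt_le _ _ eta_gt0) (Rlt_le _ _ L_gt0); nra.
  rewrite /B; nra.
have Su_term : eta * B * Su <= 2 * eta * rho * (Sa + M * A).
  have -> : 2 * eta * rho * (Sa + M * A) = eta * B / c * (8 * L * (Sa + M * A)).
    by rewrite rho_eq; field; lra.
  have -> : eta * B * Su = eta * B / c * (c * Su) by field; lra.
  by apply: Rmult_le_compat_l => //; apply/Rlt_le/Rdiv_lt_0_compat => //; nra.
have : Sa * (1 - rho) <= A / (lam * eta) + rho * M * A.
  apply: (Rmult_le_reg_l (2 * eta)); first lra.
  have -> : 2 * eta * (A / (lam * eta) + rho * M * A) = 2 / lam * A + 2 * eta * rho * M * A.
    by field; lra.
  nra.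
move=> Sa_le.
have -> : (/ (lam * eta * M) + rho) / (1 - rho) * A
          = / M * ((A / (lam * eta) + rho * M * A) / (1 - rho)) by field; lra.
apply: Rmult_le_compat_l; first exact/Rlt_le/Rinv_0_lt_compat.
have -> : Sa = Sa * (1 - rho) / (1 - rho) by field; lra.
by apply: Rmult_le_compat_r => //; apply/Rlt_le/Rinv_0_lt_compat.
Qed.

(** * Smooth convex functions *)

Section Calculus.
Variable d : nat.
Implicit Types (f : vec d -> R) (g : vec d -> vec d) (x y z h w : vec d).

Lemma dot_littleo_eq0 w :
  (forall eps, 0 < eps -> exists delta, 0 < delta /\ forall h,
     sqrt (sqnorm h) < delta -> Rabs (dot w h) <= eps * sqrt (sqnorm h)) ->
  forall j, w j = 0.
Proof.
move=> small; apply: sqnorm_eq0.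
case: (Rle_lt_or_eq_dec _ _ (sqnorm_ge0 w)) => [w_gt0|<-] //.
have r_gt0 := sqrt_lt_R0 _ w_gt0.
have rr : sqrt (sqnorm w) * sqrt (sqnorm w) = sqnorm w by apply: sqrt_sqrt; lra.
have [delta [delta_gt0 Hdelta]] := small (sqrt (sqnorm w) / 2) ltac:(lra).
(* test the bound on [s w] with [|s w| = delta / 2] *)
set s := delta / (2 * sqrt (sqnorm w)).
have s_gt0 : 0 < s by apply: Rdiv_lt_0_compat; lra.
have sr : s * sqrt (sqnorm w) = delta / 2 by rewrite /s; field; lra.
have := Hdelta (fun j => s * w j).
rewrite sqrt_sqnormZ Rabs_pos_eq ?dotZr; last lra.
move=> /(_ ltac:(rewrite sr; lra)) /(Rle_trans _ _ _ (Rle_abs _)).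
rewrite -/(sqnorm w).
have -> : sqrt (sqnorm w) / 2 * (s * sqrt (sqnorm w)) = s * sqnorm w / 2.
  by rewrite -[in RHS]rr; field.
nra.
Qed.

Lemma grad_eq0_off_support e f g : depends_only_on e f -> has_gradient f g ->
  forall x (j : 'I_d), e j = false -> g x j = 0.
Proof.
move=> fe fg x j ej.
pose w k := if e k then 0 else g x k.
suff : forall k, w k = 0 by move=> /(_ j); rewrite /w ej.
apply: dot_littleo_eq0 => eps eps_gt0.
have [delta [delta_gt0 Hdelta]] := fg x (eps / 2) ltac:(lra).
exists delta; split => // h h_small.
pose h' k := if e k then h k else 0.
have h'_le : sqrt (sqnorm h') <= sqrt (sqnorm h).
  by apply/sqrt_le_1_alt/ler_sumR => k _; rewrite /h'; case: (e k); nra.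
have Ef : f (vadd x h) = f (vadd x h') by apply: fe => k ek; rewrite /vadd /h' ek.
have -> : dot w h = dot (g x) h - dot (g x) h'.
  by rewrite -dotBr; apply: eq_dot => k; rewrite /w /h'; case: (e k); ring.
have -> : dot (g x) h - dot (g x) h'
          = (f (vadd x h') - f x - dot (g x) h') - (f (vadd x h) - f x - dot (g x) h).
  by rewrite Ef; ring.
apply: Rle_trans (Rabs_triang _ _) _; rewrite Rabs_Ropp.
have := Hdelta h h_small; have := Hdelta h' ltac:(lra); nra.
Qed.

Lemma grad_eq_on_support e f g : depends_only_on e f -> has_gradient f g ->
  forall x z, (forall j, e j -> x j = z j) -> forall j, g x j = g z j.
Proof.
move=> fe fg x z xz j.
suff : forall k, g x k - g z k = 0 by move=> /(_ j); lra.
apply: dot_littleo_eq0 => eps eps_gt0.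
have [d1 [d1_gt0 H1]] := fg x (eps / 2) ltac:(lra).
have [d2 [d2_gt0 H2]] := fg z (eps / 2) ltac:(lra).
exists (Rmin d1 d2); split; first exact: Rmin_glb_lt.
move=> h h_small.
have Ef : f (vadd x h) = f (vadd z h) by apply: fe => k ek; rewrite /vadd xz.
have Ef0 : f x = f z by apply: fe.
have -> : dot (fun k => g x k - g z k) h
          = (f (vadd z h) - f z - dot (g z) h) - (f (vadd x h) - f x - dot (g x) h).
  by rewrite dotBl Ef Ef0; ring.
apply: Rle_trans (Rabs_triang _ _) _; rewrite Rabs_Ropp.
have := H1 h (Rlt_le_trans _ _ _ h_small (Rmin_l _ _)).
have := H2 h (Rlt_le_trans _ _ _ h_small (Rmin_r _ _)).
lra.
Qed.

Lemma convex_first_order f g x y : convex f -> has_gradient f g ->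
  f x + dot (g x) (fun j => y j - x j) <= f y.
Proof.
move=> fc fg.
set h := fun j => y j - x j; set c := dot (g x) h.
apply: Rnot_lt_le => gap_gt0.
set gap := f x + c - f y; set r := sqrt (sqnorm h).
have r_ge0 : 0 <= r := sqrt_pos _.
(* a step [t h] small enough for the first-order expansion to beat the convexity chord *)
set eps := gap / (2 * (r + 1)).
have eps_gt0 : 0 < eps by apply: Rdiv_lt_0_compat; rewrite /gap; lra.
have [delta [delta_gt0 Hdelta]] := fg x eps eps_gt0.
set t := Rmin 1 (delta / (2 * (r + 1))).
have t_gt0 : 0 < t by apply: Rmin_glb_lt; [lra | apply: Rdiv_lt_0_compat; lra].
have t_le1 : t <= 1 := Rmin_l _ _.
have tr_lt : t * r < delta.
  have : t * (2 * (r + 1)) <= delta.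
    have -> : delta = delta / (2 * (r + 1)) * (2 * (r + 1)) by field; lra.
    apply: Rmult_le_compat_r; [lra | exact: Rmin_r].
  nra.
have := Hdelta (fun j => t * h j).
rewrite sqrt_sqnormZ Rabs_pos_eq -/r ?dotZr -/c; last lra.
have -> : vadd x (fun j => t * h j) = vadd (vscale t y) (vscale (1 - t) x).
  by apply: functional_extensionality => j; rewrite /vadd /vscale /h; ring.
move=> /(_ tr_lt); rewrite -Rabs_Ropp => /(Rle_trans _ _ _ (Rle_abs _)) expansion.
have chord := fc y x t (conj (Rlt_le _ _ t_gt0) t_le1).
have : c - eps * r <= f y - f x by apply: (Rmult_le_reg_l t) => //; lra.
have : eps * r * (2 * (r + 1)) = gap * r by rewrite /eps; field; lra.
rewrite /gap; nra.
Qed.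

Lemma derivable_pt_lim_line f g x h t : has_gradient f g ->
  derivable_pt_lim (fun s => f (fun j => x j + s * h j)) t
    (dot (g (fun j => x j + t * h j)) h).
Proof.
move=> fg eps eps_gt0.
set z := fun j => x j + t * h j; set r := sqrt (sqnorm h).
have r_ge0 : 0 <= r := sqrt_pos _.
have [delta [delta_gt0 Hdelta]] := fg z (eps / (2 * (r + 1)))
  ltac:(apply: Rdiv_lt_0_compat; lra).
have delta'_gt0 : 0 < delta / (r + 1) by apply: Rdiv_lt_0_compat; lra.
exists (mkposreal _ delta'_gt0) => s s_neq0 /= s_small.
have -> : (fun j => x j + (t + s) * h j) = vadd z (fun j => s * h j).
  by apply: functional_extensionality => j; rewrite /vadd /z; ring.
have s_abs : 0 < Rabs s by apply: Rabs_pos_lt.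
have sh_small : sqrt (sqnorm (fun j => s * h j)) < delta.
  rewrite sqrt_sqnormZ -/r.
  have : Rabs s * (r + 1) < delta.
    have -> : delta = delta / (r + 1) * (r + 1) by field; lra.
    apply: Rmult_lt_compat_r; lra.
  nra.
have := Hdelta _ sh_small; rewrite sqrt_sqnormZ -/r dotZr => H.
have -> : (f (vadd z (fun j => s * h j)) - f z) / s - dot (g z) h
          = (f (vadd z (fun j => s * h j)) - f z - s * dot (g z) h) * / s by field.
rewrite Rabs_mult Rabs_inv.
apply: (Rle_lt_trans _ (eps / (2 * (r + 1)) * r)).
  apply: (Rmult_le_reg_r (Rabs s)) => //.
  rewrite Rmult_assoc Rinv_l ?Rmult_1_r; lra.
have : eps / (2 * (r + 1)) * r * (2 * (r + 1)) = eps * r by field; lra.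
nra.
Qed.

Lemma lipschitz_grad_sqnorm L g x y : lipschitz_grad L g -> 0 <= L ->
  sqnorm (vsub (g x) (g y)) <= L ^ 2 * sqnorm (vsub x y).
Proof.
move=> gL L_ge0.
have a2 := sqrt_sqrt _ (sqnorm_ge0 (vsub (g x) (g y))).
have b2 := sqrt_sqrt _ (sqnorm_ge0 (vsub x y)).
have := sqrt_pos (sqnorm (vsub (g x) (g y))); have := sqrt_pos (sqnorm (vsub x y)).
have := gL x y.
set a := sqrt (sqnorm (vsub (g x) (g y))) in a2 *; set b := sqrt (sqnorm (vsub x y)) in b2 *.
rewrite -a2 -b2; nra.
Qed.

Lemma lipschitz_grad_dot_le L g x y : lipschitz_grad L g -> 0 < L ->
  dot (fun j => g y j - g x j) (fun j => y j - x j) <= L * sqnorm (fun j => y j - x j).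
Proof.
move=> gL L_gt0.
have := young_dot (fun j => y j - x j) (fun j => g y j - g x j) L_gt0.
have := lipschitz_grad_sqnorm y x gL (Rlt_le _ _ L_gt0); rewrite /vsub => Hg.
have : / L * sqnorm (fun j => g y j - g x j) <= / L * (L ^ 2 * sqnorm (fun j => y j - x j)).
  by apply: Rmult_le_compat_l => //; apply/Rlt_le/Rinv_0_lt_compat.
have -> : / L * (L ^ 2 * sqnorm (fun j => y j - x j)) = L * sqnorm (fun j => y j - x j).
  by field; lra.
rewrite dotC; lra.
Qed.

Lemma descent_lemma f g L x y : has_gradient f g -> lipschitz_grad L g -> 0 < L ->
  f y <= f x + dot (g x) (fun j => y j - x j) + L / 2 * sqnorm (fun j => y j - x j).
Proof.
move=> fg gL L_gt0.
set h := fun j => y j - x j; set c := dot (g x) h; set q := sqnorm h.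
pose psi s := f (fun j => x j + s * h j) - c * s - L / 2 * q * Rsqr s.
pose psi' s := dot (g (fun j => x j + s * h j)) h - c * 1 - L / 2 * q * (2 * s).
have psi_deriv : forall s, derivable_pt_lim psi s (psi' s).
  move=> s; apply: derivable_pt_lim_minus; last first.
    exact: (derivable_pt_lim_scal Rsqr _ s _ (derivable_pt_lim_Rsqr s)).
  apply: derivable_pt_lim_minus; first exact: derivable_pt_lim_line.
  exact: (derivable_pt_lim_scal id c s 1 (derivable_pt_lim_id s)).
pose pr s := exist _ (psi' s) (psi_deriv s) : derivable_pt psi s.
have [s [psi_MVT [s_gt0 _]]] := MVT_cor1 psi 0 1 pr Rlt_0_1.
have psi'_le0 : psi' s <= 0.
  have := lipschitz_grad_dot_le x (fun j => x j + s * h j) gL L_gt0.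
  have -> : (fun j => x j + s * h j - x j) = (fun j => s * h j).
    by apply: functional_extensionality => j; ring.
  rewrite dotZr sqnormZ dotBl -/c -/q /psi' => H.
  have : 0 <= q := sqnorm_ge0 _.
  have : s * (dot (g (fun j => x j + s * h j)) h - c) <= s * (L * s * q) by lra.
  move=> /(Rmult_le_reg_l _ _ _ s_gt0); lra.
have psi0 : psi 0 = f x.
  rewrite /psi /Rsqr; have -> : (fun j => x j + 0 * h j) = x.
    by apply: functional_extensionality => j; ring.
  ring.
have psi1 : psi 1 = f y - c - L / 2 * q.
  rewrite /psi /Rsqr; have -> : (fun j => x j + 1 * h j) = y.
    by apply: functional_extensionality => j; rewrite /h; ring.
  ring.
have : psi 1 - psi 0 <= 0 by rewrite psi_MVT /=; nra.
rewrite psi0 psi1; lra.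
Qed.

Definition splice (e : 'I_d -> bool) x y : vec d := fun j => if e j then y j else x j.

Lemma sqnorm_splice_sub e x y :
  sqnorm (fun j => splice e x y j - x j) = sqnorm_on e (fun j => y j - x j).
Proof.
by rewrite /sqnorm_on big_mkcond; apply: eq_bigr => j _; rewrite /splice; case: (e j); ring.
Qed.

Lemma sparse_descent_lemma e f g L x y : depends_only_on e f -> has_gradient f g ->
  lipschitz_grad L g -> 0 < L ->
  f y <= f x + dot (g x) (fun j => y j - x j) + L / 2 * sqnorm_on e (fun j => y j - x j).
Proof.
move=> fe fg gL L_gt0.
have -> : f y = f (splice e x y) by apply: fe => j ej; rewrite /splice ej.
have <- : dot (g x) (fun j => splice e x y j - x j) = dot (g x) (fun j => y j - x j).
  apply: eq_dot => j; rewrite /splice; case ej: (e j) => //.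
  by rewrite (grad_eq0_off_support fe fg x ej); ring.
rewrite -sqnorm_splice_sub; exact: descent_lemma.
Qed.

Lemma sparse_lipschitz_grad e f g L x y : depends_only_on e f -> has_gradient f g ->
  lipschitz_grad L g -> 0 <= L ->
  sqnorm (fun j => g y j - g x j) <= L ^ 2 * sqnorm_on e (fun j => y j - x j).
Proof.
move=> fe fg gL L_ge0.
have := lipschitz_grad_sqnorm (splice e x y) x gL L_ge0.
rewrite /vsub sqnorm_splice_sub; apply: Rle_trans; right; apply: eq_sqnorm => j.
by rewrite (grad_eq_on_support fe fg (z := splice e x y)) // => k ek; rewrite /splice ek.
Qed.

Lemma grad_cocoercive f g L x y : convex f -> has_gradient f g ->
  lipschitz_grad L g -> 0 < L ->
  sqnorm (fun j => g x j - g y j) <= 2 * L * (f x - f y - dot (g y) (fun j => x j - y j)).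
Proof.
move=> fc fg gL L_gt0.
set w := fun j => g x j - g y j.
(* compare [f] at the gradient step [z = x - w / L] from [y] (convexity) and from [x] (descent) *)
set z := fun j => x j - / L * w j.
have := convex_first_order y z fc fg; have := descent_lemma x z fg gL L_gt0.
have -> : (fun j => z j - y j) = (fun j => (x j - y j) + - / L * w j).
  by apply: functional_extensionality => j; rewrite /z; ring.
have -> : (fun j => z j - x j) = (fun j => - / L * w j).
  by apply: functional_extensionality => j; rewrite /z; ring.
rewrite dotDr !dotZr sqnormZ.
have -> : dot (g x) w = sqnorm w + dot (g y) w by rewrite /sqnorm /w dotBl; ring.
have -> : L / 2 * ((- / L) ^ 2 * sqnorm w) = / (2 * L) * sqnorm w by field; lra.
have -> : - / L * (sqnorm w + dot (g y) w)
          = - (2 * (/ (2 * L) * sqnorm w)) + - / L * dot (g y) w by field; lra.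
move=> descent convexity.
have -> : sqnorm w = 2 * L * (/ (2 * L) * sqnorm w) by field; lra.
apply: Rmult_le_compat_l; lra.
Qed.
End Calculus.

(** * Averages over the components *)

Definition avg (n : nat) (F : nat -> R) : R := / INR n * rsum n F.

Section Average.
Variable n : nat.
Implicit Types F G : nat -> R.

Lemma avgD F G : avg n (fun i => F i + G i) = avg n F + avg n G.
Proof. by rewrite /avg rsumD; ring. Qed.

Lemma avgB F G : avg n (fun i => F i - G i) = avg n F - avg n G.
Proof. by rewrite /avg rsumB; ring. Qed.

Lemma avgZ c F : avg n (fun i => c * F i) = c * avg n F.
Proof. by rewrite /avg rsumZ; ring. Qed.

Lemma eq_avg F G : (forall i, (i < n)%N -> F i = G i) -> avg n F = avg n G.
Proof. by move=> FG; rewrite /avg (eq_rsum FG). Qed.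

Lemma avg_dot d (gs : nat -> vec d -> vec d) x (v : vec d) :
  avg n (fun i => dot (gs i x) v) = dot (gavg n gs x) v.
Proof.
rewrite /avg /rsum /dot /gavg /rsum -sumRZ.
under eq_bigr => i _ do rewrite -sumRZ.
rewrite exchange_big; apply: eq_bigr => j _.
by rewrite [RHS]Rmult_comm -!sumRZ; apply: eq_bigr => i _; ring.
Qed.

Lemma favgE d (fs : nat -> vec d -> R) x : favg n fs x = avg n (fun i => fs i x).
Proof. by []. Qed.

Hypothesis n_gt0 : (0 < n)%N.

Lemma INR_gt0 : 0 < INR n.
Proof. by apply/lt_0_INR/ltP. Qed.

Lemma ler_avg F G : (forall i, (i < n)%N -> F i <= G i) -> avg n F <= avg n G.
Proof.
move=> FG; apply: Rmult_le_compat_l; last exact: ler_rsum.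
exact/Rlt_le/Rinv_0_lt_compat/INR_gt0.
Qed.

Lemma avg_ge0 F : (forall i, (i < n)%N -> 0 <= F i) -> 0 <= avg n F.
Proof.
move=> F0; apply: Rmult_le_pos; last exact: rsum_ge0.
exact/Rlt_le/Rinv_0_lt_compat/INR_gt0.
Qed.

Lemma avg_const c : avg n (fun _ => c) = c.
Proof. by rewrite /avg rsum_const; have := INR_gt0 => ?; field; lra. Qed.
End Average.

(** * Strong convexity and the constants [L] and [Delta] *)

Lemma strongly_convex_sqdist_le d (F : vec d -> R) lam xstar x : 0 < lam ->
  strongly_convex lam F -> (forall y, F xstar <= F y) ->
  sqnorm (fun j => x j - xstar j) <= 2 / lam * (F x - F xstar).
Proof.
move=> lam_gt0 Fsc Fmin.
set q := sqnorm (fun j => x j - xstar j); set a := F x - F xstar.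
have a_ge0 : 0 <= a by have := Fmin x; rewrite /a; lra.
have q_ge0 : 0 <= q := sqnorm_ge0 _.
suff : lam / 2 * q <= a.
  move=> H; have -> : q = 2 / lam * (lam / 2 * q) by field; lra.
  by apply: Rmult_le_compat_l => //; apply/Rlt_le/Rdiv_lt_0_compat; lra.
apply: Rnot_lt_le => a_lt.
(* [t] is chosen so that the strong-convexity chord at [t] dips below [F xstar] *)
have lq_gt0 : 0 < lam * q by nra.
set t := (lam / 2 * q - a) / (lam * q).
have tlq : t * (lam * q) = lam / 2 * q - a.
  by rewrite /t /Rdiv Rmult_assoc Rinv_l; [ring | lra].
have t_gt0 : 0 < t by apply: Rdiv_lt_0_compat; lra.
have t_le1 : t <= 1 by apply: (Rmult_le_reg_r (lam * q)) => //; lra.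
have := Fsc x xstar t (conj (Rlt_le _ _ t_gt0) t_le1).
have := Fmin (vadd (vscale t x) (vscale (1 - t) xstar)).
rewrite -/q => H1 H2.
have : t * (lam / 2 * (1 - t) * q) <= t * a by rewrite /a; lra.
move=> /(Rmult_le_reg_l _ _ _ t_gt0).
have : lam / 2 * (1 - t) * q = (lam / 2 * q + a) / 2 by nra.
lra.
Qed.

Lemma sqnorm_const1_gt0 d : (0 < d)%N -> 0 < sqnorm (fun _ : 'I_d => 1).
Proof. by move=> d_gt0; have := sqr_coord_le_sqnorm (fun _ : 'I_d => 1) (Ordinal d_gt0); lra. Qed.

Lemma sparsity_const_ge0 d n (e : nat -> 'I_d -> bool) Delta : (0 < d)%N -> (0 < n)%N ->
  (forall x, / INR n * rsum n (fun i => sqnorm_on (e i) x) <= Delta * sqnorm x) ->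
  0 <= Delta.
Proof.
move=> d_gt0 n_gt0 Delta_sparse.
have := Delta_sparse (fun _ => 1); have := sqnorm_const1_gt0 d_gt0.
have : 0 <= avg n (fun i => sqnorm_on (e i) (fun _ => 1)).
  by apply: avg_ge0 => // i _; exact: sqnorm_on_ge0.
rewrite /avg; nra.
Qed.

Lemma lipschitz_grad_nonpos_affine d (f : vec d -> R) g L x y :
  convex f -> has_gradient f g -> lipschitz_grad L g -> L <= 0 ->
  f y = f x + dot (g x) (fun j => y j - x j).
Proof.
move=> fc fg gL L_le0.
have g_const : forall j, g y j = g x j.
  move=> j; apply: Rminus_diag_uniq; move: j; apply: sqnorm_eq0.
  apply: sqrt_eq_0; first exact: sqnorm_ge0.
  have := gL y x; have := sqrt_pos (sqnorm (vsub (g y) (g x))).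
  have := sqrt_pos (sqnorm (vsub y x)); rewrite /vsub; nra.
have := convex_first_order x y fc fg; have := convex_first_order y x fc fg.
have -> : dot (g y) (fun j => x j - y j) = - dot (g x) (fun j => y j - x j).
  by rewrite /dot -sumRN; apply: eq_bigr => j _; rewrite g_const; ring.
lra.
Qed.

Lemma lipschitz_const_gt0 d n (fs : nat -> vec d -> R) gs L lam :
  (0 < d)%N -> (0 < n)%N ->
  (forall i, (i < n)%N -> convex (fs i)) ->
  (forall i, (i < n)%N -> has_gradient (fs i) (gs i)) ->
  (forall i, (i < n)%N -> lipschitz_grad L (gs i)) ->
  0 < lam -> strongly_convex lam (favg n fs) -> 0 < L.
Proof.
move=> d_gt0 n_gt0 fs_convex fs_grad gs_lipschitz lam_gt0 f_sc.
apply: Rnot_le_lt => L_le0.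
(* if L <= 0 every f_i, hence f, is affine, contradicting strong convexity *)
pose a : vec d := fun _ => 0; pose b : vec d := fun _ => 1.
set z := vadd (vscale (1 / 2) b) (vscale (1 - 1 / 2) a).
have f_mid : favg n fs z = 1 / 2 * favg n fs b + (1 - 1 / 2) * favg n fs a.
  rewrite !favgE -!avgZ -avgD; apply: eq_avg => i ni.
  have affine := lipschitz_grad_nonpos_affine a _ (fs_convex i ni) (fs_grad i ni)
    (gs_lipschitz i ni) L_le0.
  rewrite (affine z) (affine b).
  have -> : dot (gs i a) (fun j => z j - a j) = 1 / 2 * dot (gs i a) (fun j => b j - a j).
    by rewrite -dotZr; apply: eq_dot => j; rewrite /z /vadd /vscale /a /b; field.
  field.
have := f_sc b a (1 / 2) ltac:(lra); rewrite -/z f_mid.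
have -> : sqnorm (vsub b a) = sqnorm (fun _ : 'I_d => 1).
  by apply: eq_sqnorm => j; rewrite /vsub /a /b; ring.
have := sqnorm_const1_gt0 d_gt0; nra.
Qed.

(** * Expectations over indices and selections *)

Section Update.
Implicit Types (g : nat -> nat) (t s i j u : nat).

Lemma upd_eq g t i : upd g t i t = i.
Proof. by rewrite /upd eqxx. Qed.

Lemma upd_neq g t i u : u <> t -> upd g t i u = g u.
Proof. by move=> /eqP ut; rewrite /upd (negbTE ut). Qed.

Lemma upd_upd g t i j : upd (upd g t j) t i = upd g t i.
Proof. by apply: functional_extensionality => u; rewrite /upd; case: (u == t). Qed.

Lemma upd_comm g t s i j : t <> s -> upd (upd g s j) t i = upd (upd g t i) s j.
Proof.
move=> ts; apply: functional_extensionality => u; rewrite /upd.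
by case: eqP => [-> | _]; case: eqP => // st; case: ts.
Qed.
End Update.

Section ExpectationIdx.
Variable n : nat.
Implicit Types (T : nat) (F G : (nat -> nat) -> R).

Lemma EidxS T F : Eidx n T.+1 F = avg n (fun i => Eidx n T (fun g => F (upd g T i))).
Proof. by []. Qed.

Lemma eq_Eidx T F G : (forall g, F g = G g) -> Eidx n T F = Eidx n T G.
Proof. by move=> FG; rewrite (functional_extensionality _ _ FG). Qed.

Lemma Eidx_lin T a b F G :
  Eidx n T (fun g => a * F g + b * G g) = a * Eidx n T F + b * Eidx n T G.
Proof.
elim: T F G => [|T IH] F G //=.
rewrite (eq_rsum (G := fun i => a * Eidx n T (fun g => F (upd g T i))
                              + b * Eidx n T (fun g => G (upd g T i)))); last first.
  by move=> i _; rewrite IH.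
by rewrite rsumD !rsumZ; ring.
Qed.

Lemma EidxD T F G : Eidx n T (fun g => F g + G g) = Eidx n T F + Eidx n T G.
Proof.
have -> : Eidx n T F + Eidx n T G = 1 * Eidx n T F + 1 * Eidx n T G by ring.
by rewrite -Eidx_lin; apply: eq_Eidx => g; ring.
Qed.

Lemma EidxB T F G : Eidx n T (fun g => F g - G g) = Eidx n T F - Eidx n T G.
Proof.
have -> : Eidx n T F - Eidx n T G = 1 * Eidx n T F + -1 * Eidx n T G by ring.
by rewrite -Eidx_lin; apply: eq_Eidx => g; ring.
Qed.

Lemma EidxZ T a F : Eidx n T (fun g => a * F g) = a * Eidx n T F.
Proof.
have -> : a * Eidx n T F = a * Eidx n T F + 0 * Eidx n T F by ring.
by rewrite -Eidx_lin; apply: eq_Eidx => g; ring.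
Qed.

Lemma Eidx_rsum T k (H : nat -> (nat -> nat) -> R) :
  Eidx n T (fun g => rsum k (H^~ g)) = rsum k (fun s => Eidx n T (H s)).
Proof.
elim: k => [|k IH].
  rewrite rsum0 (@eq_Eidx _ _ (fun g => 0 * 0)) ?EidxZ; first ring.
  by move=> g; rewrite rsum0; ring.
by rewrite rsumS -IH -EidxD; apply: eq_Eidx => g; rewrite rsumS.
Qed.

Hypothesis n_gt0 : (0 < n)%N.

Lemma Eidx_const T c : Eidx n T (fun _ => c) = c.
Proof.
elim: T => [|T IH] //; rewrite EidxS.
by under eq_avg => i _ do rewrite IH; exact: avg_const.
Qed.

Lemma ler_Eidx T F G : (forall g, F g <= G g) -> Eidx n T F <= Eidx n T G.
Proof.
elim: T F G => [|T IH] F G FG //=.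
by apply: (ler_avg n_gt0) => i _; apply: IH => g; exact: FG.
Qed.

Lemma Eidx_ge0 T F : (forall g, 0 <= F g) -> 0 <= Eidx n T F.
Proof. by move=> F0; rewrite -(Eidx_const T 0); exact: ler_Eidx. Qed.

Lemma Eidx_resample T t F : (t < T)%N ->
  Eidx n T F = Eidx n T (fun g => avg n (fun i => F (upd g t i))).
Proof.
elim: T F => [|T IH] F // tT; rewrite !EidxS.
move: tT; rewrite ltnS leq_eqVlt => /orP [/eqP -> | t_lt].
  under [in RHS]eq_avg => j _ do under eq_Eidx => g do under eq_avg => i _ do rewrite upd_upd.
  by rewrite avg_const // /avg (EidxZ _ _ (fun g => rsum n _)) Eidx_rsum.
apply: eq_avg => j _; rewrite (IH _ t_lt); apply: eq_Eidx => g.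
apply: eq_avg => i _; rewrite upd_comm // => tT.
by rewrite tT ltnn in t_lt.
Qed.

Lemma Eidx_widen T T' F :
  (forall g g', (forall u, (u < T)%N -> g u = g' u) -> F g = F g') ->
  (T <= T')%N -> Eidx n T' F = Eidx n T F.
Proof.
move=> F_dep; elim: T' => [|T' IH]; first by rewrite leqn0 => /eqP ->.
rewrite leq_eqVlt => /orP [/eqP -> // | T_lt].
rewrite EidxS -IH // -[RHS](avg_const n_gt0); apply: eq_avg => i _.
by apply: eq_Eidx => g; apply: F_dep => u uT; apply: upd_neq; lia.
Qed.
End ExpectationIdx.

Section ExpectationSel.
Variables (m : nat) (p : nat -> R).
Implicit Types (K : nat) (F G : (nat -> nat) -> R).

Lemma eq_Esel K F G : (forall h, F h = G h) -> Esel m p K F = Esel m p K G.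
Proof. by move=> FG; rewrite (functional_extensionality _ _ FG). Qed.

Lemma Esel_lin K a b F G :
  Esel m p K (fun h => a * F h + b * G h) = a * Esel m p K F + b * Esel m p K G.
Proof.
elim: K F G => [|K IH] F G //=.
rewrite (eq_rsum (G := fun s => a * (p s * Esel m p K (fun h => F (upd h K s)))
                              + b * (p s * Esel m p K (fun h => G (upd h K s))))); last first.
  by move=> s _; rewrite IH; ring.
by rewrite rsumD !rsumZ; ring.
Qed.

Lemma EselZ K a F : Esel m p K (fun h => a * F h) = a * Esel m p K F.
Proof.
have -> : a * Esel m p K F = a * Esel m p K F + 0 * Esel m p K F by ring.
by rewrite -Esel_lin; apply: eq_Esel => h; ring.
Qed.

Lemma Esel_rsum K k (H : nat -> (nat -> nat) -> R) :
  Esel m p K (fun h => rsum k (H^~ h)) = rsum k (fun s => Esel m p K (H s)).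
Proof.
elim: k => [|k IH].
  rewrite rsum0 (@eq_Esel _ _ (fun h => 0 * 0)) ?EselZ; first ring.
  by move=> h; rewrite rsum0; ring.
rewrite rsumS -IH; have -> : forall x y, x + y = 1 * x + 1 * y by move=> *; ring.
by rewrite -Esel_lin; apply: eq_Esel => h; rewrite rsumS; ring.
Qed.

Hypothesis p_ge0 : forall s, (s < m)%N -> 0 <= p s.

Lemma ler_Esel K F G : (forall h, F h <= G h) -> Esel m p K F <= Esel m p K G.
Proof.
elim: K F G => [|K IH] F G FG //=.
apply: ler_rsum => s sm; apply: Rmult_le_compat_l; first exact: p_ge0.
by apply: IH => h; exact: FG.
Qed.
End ExpectationSel.

(** * The SVRG trajectory *)

Section Trajectory.
Variables (d n m : nat) (gs : nat -> vec d -> vec d) (eta : R)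
  (D : nat -> seq nat -> seq nat -> nat) (x0 : vec d).
Local Notation traj := (svrg_traj n m gs eta D x0).

Definition svrg_iter idx sel t : vec d := nth x0 (traj idx sel t) t.

Lemma size_svrg_traj idx sel t : size (traj idx sel t) = t.+1.
Proof. by elim: t => [|t IH] //=; rewrite size_rcons IH. Qed.

Lemma nth_svrg_traj idx sel t u : (u <= t)%N -> nth x0 (traj idx sel t) u = svrg_iter idx sel u.
Proof.
elim: t => [|t IH]; first by rewrite leqn0 => /eqP ->.
rewrite leq_eqVlt => /orP [/eqP -> // | u_lt].
by rewrite /= nth_rcons size_svrg_traj u_lt; exact: IH.
Qed.

Lemma svrg_iterS idx sel t :
  svrg_iter idx sel t.+1 = svrg_step n m gs eta D x0 idx sel t (traj idx sel t).
Proof. by rewrite /svrg_iter /= nth_rcons size_svrg_traj ltnn eqxx. Qed.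

Lemma svrg_traj_idx_eq idx idx' sel t : (forall u, (u < t)%N -> idx u = idx' u) ->
  traj idx sel t = traj idx' sel t.
Proof.
elim: t => [|t IH] idx_eq //=.
rewrite IH => [|u ut]; last exact/idx_eq/ltnW.
congr rcons; rewrite /svrg_step (idx_eq t (ltnSn t)).
have -> // : map idx (iota 0 t) = map idx' (iota 0 t).
by apply/eq_in_map => u; rewrite mem_iota add0n => /andP [_ ut]; exact/idx_eq/ltnW.
Qed.

Hypothesis m_gt0 : (0 < m)%N.

Lemma svrg_traj_sel_eq idx sel sel' k t : (forall j, (j < k)%N -> sel j = sel' j) ->
  (t < k * m + m)%N -> traj idx sel t = traj idx sel' t.
Proof.
move=> sel_eq; elim: t => [|t IH] //= t_lt.
rewrite IH; last exact: ltnW.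
have tm_le : (t %/ m <= k)%N by rewrite -ltnS ltn_divLR // mulSn addnC; exact: ltnW.
congr rcons; rewrite /svrg_step.
have -> : map sel (iota 0 (t %/ m)) = map sel' (iota 0 (t %/ m)).
  apply/eq_in_map => u; rewrite mem_iota add0n => /andP [_ ut].
  exact/sel_eq/(leq_trans ut tm_le).
case: ifP => // /eqP epoch_end.
(* a snapshot selected before time [k m + m - 1] belongs to an epoch before [k] *)
suff tm_lt : (t %/ m < k)%N by rewrite sel_eq.
rewrite ltn_neqAle tm_le andbT; apply/negP => /eqP tm_eq.
have := leq_divM t m; rewrite tm_eq => t_ge.
have t1 : t.+1 = (k * m + (t.+1 - k * m))%N by lia.
by move: epoch_end; rewrite t1 modnMDl modn_small; lia.
Qed.
End Trajectory.

(** * Finite-sum estimates and one epoch of asynchronous SVRG *)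

Section FiniteSum.
Variables (d n : nat) (fs : nat -> vec d -> R) (gs : nat -> vec d -> vec d)
  (e : nat -> 'I_d -> bool) (L Delta : R) (xstar : vec d).
Hypothesis n_gt0 : (0 < n)%N.
Hypothesis fs_convex : forall i, (i < n)%N -> convex (fs i).
Hypothesis fs_grad : forall i, (i < n)%N -> has_gradient (fs i) (gs i).
Hypothesis gs_lipschitz : forall i, (i < n)%N -> lipschitz_grad L (gs i).
Hypothesis L_gt0 : 0 < L.
Hypothesis xstar_min : forall x, favg n fs xstar <= favg n fs x.
Hypothesis fs_sparse : forall i, (i < n)%N -> depends_only_on (e i) (fs i).
Hypothesis Delta_sparse :
  forall x, / INR n * rsum n (fun i => sqnorm_on (e i) x) <= Delta * sqnorm x.

Local Notation f := (favg n fs).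
Local Notation grad_f := (gavg n gs).
Implicit Types x xh xt v : vec d.

Lemma gavg_eq0_at_min j : grad_f xstar j = 0.
Proof.
move: j; apply: sqnorm_eq0.
(* a gradient step from [xstar] would decrease [f] by [|grad f xstar|^2 / (2 L)] *)
set q := sqnorm (grad_f xstar).
set h := fun j => - / L * grad_f xstar j.
have : avg n (fun i => fs i (fun j => xstar j + h j))
       <= avg n (fun i => fs i xstar + dot (gs i xstar) h + L / 2 * sqnorm h).
  apply: ler_avg => // i ni.
  have := descent_lemma xstar (fun j => xstar j + h j) (fs_grad ni) (gs_lipschitz ni) L_gt0.
  by have -> : (fun j => xstar j + h j - xstar j) = h
    by apply: functional_extensionality => j; ring.
rewrite !avgD avg_dot avg_const // -!favgE.
rewrite [dot _ h]dotZr [sqnorm h]sqnormZ -/(sqnorm _) -/q.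
have := xstar_min (fun j => xstar j + h j).
rewrite Rplus_assoc (_ : - / L * q + L / 2 * ((- / L) ^ 2 * q) = - (/ (2 * L) * q));
  last by field; lra.
have : 0 < / (2 * L) by apply: Rinv_0_lt_compat; lra.
have : 0 <= q := sqnorm_ge0 _.
nra.
Qed.

Lemma dot_gavg_min v : dot (grad_f xstar) v = 0.
Proof. by rewrite /dot big1 // => j _; rewrite gavg_eq0_at_min; ring. Qed.

Lemma avg_grad_dev_sq_le x :
  avg n (fun i => sqnorm (fun j => gs i x j - gs i xstar j)) <= 2 * L * (f x - f xstar).
Proof.
have := ler_avg n_gt0 (fun i ni => grad_cocoercive x xstar
  (fs_convex ni) (fs_grad ni) (gs_lipschitz ni) L_gt0).
by rewrite avgZ !avgB avg_dot dot_gavg_min -!favgE Rminus_0_r.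
Qed.

(* [xh] is the stale point the gradient is read at, [xt] the epoch snapshot *)
Definition svrg_dir xh xt (i : nat) : vec d :=
  fun j => - (gs i xh j - gs i xt j + grad_f xt j).

Lemma avg_dot_svrg_dir v xh xt :
  avg n (fun i => dot v (svrg_dir xh xt i)) = - dot (grad_f xh) v.
Proof.
rewrite (eq_avg (G := fun i =>
  (-1) * dot (gs i xh) v + dot (gs i xt) v - dot (grad_f xt) v)); last first.
  move=> i _; rewrite /svrg_dir /dot -sumRZ -sumRD -sumRB.
  by apply: eq_bigr => j _; ring.
by rewrite avgB avgD avg_const // avgZ !avg_dot; ring.
Qed.

Lemma stale_grad_dot_le x xh :
  - dot (grad_f xh) (fun j => x j - xstar j)
  <= - (f x - f xstar) + L / 2 * Delta * sqnorm (fun j => x j - xh j).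
Proof.
have : avg n (fun i => - dot (gs i xh) (fun j => x j - xstar j))
       <= avg n (fun i => fs i xstar - fs i x
                          + L / 2 * sqnorm_on (e i) (fun j => x j - xh j)).
  apply: ler_avg => // i ni.
  have := convex_first_order xh xstar (fs_convex ni) (fs_grad ni).
  have := sparse_descent_lemma xh x (fs_sparse ni) (fs_grad ni) (gs_lipschitz ni) L_gt0.
  have -> : dot (gs i xh) (fun j => x j - xstar j)
            = dot (gs i xh) (fun j => x j - xh j) - dot (gs i xh) (fun j => xstar j - xh j).
    by rewrite -dotBr; apply: eq_dot => j; ring.
  lra.
rewrite (eq_avg (G := fun i => -1 * dot (gs i xh) (fun j => x j - xstar j))); last first.
  by move=> i _; ring.
rewrite avgZ avg_dot avgD avgB avgZ -!favgE.
have : L / 2 * avg n (fun i => sqnorm_on (e i) (fun j => x j - xh j))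
       <= L / 2 * (Delta * sqnorm (fun j => x j - xh j)).
  by apply: Rmult_le_compat_l; [lra | exact: Delta_sparse].
lra.
Qed.

Lemma avg_dist_svrg_step x xh xt eta : 0 < eta ->
  avg n (fun i => sqnorm (fun j => x j + eta * svrg_dir xh xt i j - xstar j))
  <= sqnorm (fun j => x j - xstar j) - 2 * eta * (f x - f xstar)
     + eta * L * Delta * sqnorm (fun j => x j - xh j)
     + eta ^ 2 * avg n (fun i => sqnorm (svrg_dir xh xt i)).
Proof.
move=> eta_gt0.
rewrite (eq_avg (G := fun i => sqnorm (fun j => x j - xstar j)
  + 2 * eta * dot (fun j => x j - xstar j) (svrg_dir xh xt i)
  + eta ^ 2 * sqnorm (svrg_dir xh xt i))); last first.
  move=> i _; rewrite (@eq_sqnorm _ _ (fun j => (x j - xstar j) + eta * svrg_dir xh xt i j)).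
    by rewrite sqnormD dotZr sqnormZ; ring.
  by move=> j; ring.
rewrite !avgD avg_const // !avgZ avg_dot_svrg_dir.
have := stale_grad_dot_le x xh; nra.
Qed.

Lemma avg_variance_le xt :
  avg n (fun i => sqnorm (fun j => gs i xt j - gs i xstar j - grad_f xt j))
  <= avg n (fun i => sqnorm (fun j => gs i xt j - gs i xstar j)).
Proof.
under eq_avg => i _ do rewrite sqnormB dotBl.
rewrite avgD avgB avgZ avgB !avg_dot dot_gavg_min avg_const //.
have := sqnorm_ge0 (grad_f xt); rewrite /sqnorm; lra.
Qed.

Lemma avg_svrg_dir_sq_le x xh xt :
  avg n (fun i => sqnorm (svrg_dir xh xt i))
  <= 8 * L * (f x - f xstar) + 8 * L * (f xt - f xstar)
     + 2 * L ^ 2 * Delta * sqnorm (fun j => x j - xh j).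
Proof.
(* split u = -(c_i - v_i + b_i): deviation at [x], centred deviation at [xt], staleness *)
pose c i j := gs i x j - gs i xstar j.
pose v i j := gs i xt j - gs i xstar j - grad_f xt j.
pose b i j := gs i xh j - gs i x j.
have split_dir : forall i, sqnorm (svrg_dir xh xt i)
    <= 4 * sqnorm (c i) + 4 * sqnorm (v i) + 2 * sqnorm (b i).
  move=> i; rewrite -sqnormN.
  have -> : sqnorm (fun j => - svrg_dir xh xt i j)
            = sqnorm (fun j => (c i j + - v i j) + b i j).
    by apply: eq_sqnorm => j; rewrite /svrg_dir /c /v /b; ring.
  apply: Rle_trans (sqnormD_le _ _) _.
  have := sqnormD_le (c i) (fun j => - v i j); rewrite sqnormN; lra.
have := ler_avg n_gt0 (fun i _ => split_dir i); rewrite !avgD !avgZ.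
have := avg_grad_dev_sq_le x.
have := Rle_trans _ _ _ (avg_variance_le xt) (avg_grad_dev_sq_le xt).
have : avg n (fun i => sqnorm (b i)) <= L ^ 2 * (Delta * sqnorm (fun j => x j - xh j)).
  apply: Rle_trans (_ : avg n (fun i => L ^ 2 * sqnorm_on (e i) (fun j => xh j - x j)) <= _).
    apply: ler_avg => // i ni.
    exact: sparse_lipschitz_grad (fs_sparse ni) (fs_grad ni) (gs_lipschitz ni) (Rlt_le _ _ L_gt0).
  rewrite avgZ; apply: Rmult_le_compat_l; first exact: pow2_ge_0.
  rewrite sqnorm_subC; exact: Delta_sparse.
rewrite /c /v; lra.
Qed.

Section Epoch.
Variables (m tau : nat) (lam eta : R) (x0 : vec d)
  (D : nat -> seq nat -> seq nat -> nat) (sel : nat -> nat) (k : nat).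
Hypothesis m_gt0 : (0 < m)%N.
Hypothesis D_window : forall t hi hs,
  (t %/ m * m <= D t hi hs)%N /\ (D t hi hs <= t)%N /\ (t - D t hi hs <= tau)%N.
Hypothesis eta_gt0 : 0 < eta.

Local Notation iter idx u := (svrg_iter n m gs eta D x0 idx sel u).

Definition epoch_iter idx t := iter idx (k * m + t).
Definition anchor idx := iter idx (k * m).
Definition delay t idx :=
  D (k * m + t) (map idx (iota 0 (k * m + t))) (map sel (iota 0 k)).
Definition stale_iter t idx := iter idx (delay t idx).
Definition epoch_step t idx : vec d := fun j =>
  epoch_iter idx t j + eta * svrg_dir (stale_iter t idx) (anchor idx) (idx (k * m + t)%N) j.

Lemma epoch_div t : (t < m)%N -> ((k * m + t) %/ m = k)%N.
Proof. by move=> tm; rewrite divnMDl // divn_small // addn0. Qed.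

Lemma delay_window t idx : (t < m)%N ->
  [/\ (k * m <= delay t idx)%N, (delay t idx <= k * m + t)%N
    & (k * m + t - delay t idx <= tau)%N].
Proof.
move=> tm; have [] := D_window (k * m + t) (map idx (iota 0 (k * m + t))) (map sel (iota 0 k)).
by rewrite epoch_div // => ? [].
Qed.

Lemma iter_upd idx u s i : (u <= s)%N -> iter (upd idx s i) u = iter idx u.
Proof.
move=> us; rewrite /svrg_iter (@svrg_traj_idx_eq _ n m gs eta D x0 _ idx) // => w wu.
by apply: upd_neq; lia.
Qed.

Lemma delay_upd t idx i : delay t (upd idx (k * m + t) i) = delay t idx.
Proof.
rewrite /delay; congr D; apply/eq_in_map => u; rewrite mem_iota add0n => /andP [_ ut].
by apply: upd_neq; lia.
Qed.

Lemma stale_iter_upd t idx i : (t < m)%N -> stale_iter t (upd idx (k * m + t) i) = stale_iter t idx.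
Proof.
by move=> tm; rewrite /stale_iter delay_upd iter_upd //; have [] := delay_window idx tm.
Qed.

Lemma epoch_iter_upd t idx i : epoch_iter (upd idx (k * m + t) i) t = epoch_iter idx t.
Proof. exact: iter_upd. Qed.

Lemma anchor_upd t idx i : anchor (upd idx (k * m + t) i) = anchor idx.
Proof. by apply: iter_upd; rewrite leq_addr. Qed.

Lemma epoch_iterS t idx : (t.+1 < m)%N -> epoch_iter idx t.+1 = epoch_step t idx.
Proof.
move=> tm; have [_ delay_le _] := delay_window idx (ltnW tm).
rewrite /epoch_iter addnS svrg_iterS /svrg_step epoch_div; last lia.
rewrite -addnS modnMDl modn_small //=.
apply: functional_extensionality => j.
by rewrite /epoch_step /svrg_dir /epoch_iter /stale_iter /anchor !nth_svrg_traj // leq_addr.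
Qed.

Local Notation Ek := (Eidx n (k * m + m)).

Definition Esubopt t := Ek (fun idx => f (epoch_iter idx t) - f xstar).
Definition Esubopt_anchor := Ek (fun idx => f (anchor idx) - f xstar).
Definition Edist t := Ek (fun idx => sqnorm (fun j => epoch_iter idx t j - xstar j)).
Definition Estale t := Ek (fun idx => sqnorm (fun j => epoch_iter idx t j - stale_iter t idx j)).
Definition Edir t :=
  Ek (fun idx => avg n (fun i => sqnorm (svrg_dir (stale_iter t idx) (anchor idx) i))).

Lemma Edir_ge0 t : 0 <= Edir t.
Proof. by apply: Eidx_ge0 => // idx; apply: avg_ge0 => // i _; exact: sqnorm_ge0. Qed.

(* the fresh index [i_(km+t)] can be re-drawn: everything else in the step is independent of it *)
Lemma Ek_resample t (F : vec d -> vec d -> vec d -> nat -> R) : (t < m)%N ->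
  Ek (fun idx => F (epoch_iter idx t) (stale_iter t idx) (anchor idx) (idx (k * m + t)%N))
  = Ek (fun idx => avg n (F (epoch_iter idx t) (stale_iter t idx) (anchor idx))).
Proof.
move=> tm; rewrite (Eidx_resample n_gt0 (t := k * m + t)); last lia.
apply: eq_Eidx => idx; apply: eq_avg => i _.
by rewrite epoch_iter_upd stale_iter_upd // anchor_upd upd_eq.
Qed.

Lemma Edist_step_le t : (t < m)%N ->
  Ek (fun idx => sqnorm (fun j => epoch_step t idx j - xstar j))
  <= Edist t - 2 * eta * Esubopt t + eta * L * Delta * Estale t + eta ^ 2 * Edir t.
Proof.
move=> tm.
rewrite (Ek_resample (fun x xh xt i => sqnorm (fun j => x j + eta * svrg_dir xh xt i j - xstar j))) //.
apply: Rle_trans (ler_Eidx n_gt0 _ (fun idx => avg_dist_svrg_step _ _ _ eta_gt0)) _.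
by right; rewrite /Edist /Esubopt /Estale /Edir EidxD EidxD EidxB !EidxZ.
Qed.

Lemma Edir_le t :
  Edir t <= 8 * L * Esubopt t + 8 * L * Esubopt_anchor + 2 * L ^ 2 * Delta * Estale t.
Proof.
rewrite /Edir /Esubopt /Esubopt_anchor /Estale -!EidxZ -!EidxD.
by apply: ler_Eidx => // idx; exact: avg_svrg_dir_sq_le.
Qed.

Lemma Eincrement_sq s : (s.+1 < m)%N ->
  Ek (fun idx => sqnorm (fun j => epoch_iter idx s.+1 j - epoch_iter idx s j)) = eta ^ 2 * Edir s.
Proof.
move=> sm.
rewrite (@eq_Eidx _ _ _ (fun idx =>
  eta ^ 2 * sqnorm (svrg_dir (stale_iter s idx) (anchor idx) (idx (k * m + s)%N)))); last first.
  by move=> idx; rewrite epoch_iterS // -sqnormZ; apply: eq_sqnorm => j; rewrite /epoch_step; ring.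
by rewrite EidxZ (Ek_resample (fun _ xh xt i => sqnorm (svrg_dir xh xt i))) //; lia.
Qed.

Lemma Edist0_le : strongly_convex lam f -> 0 < lam -> Edist 0 <= 2 / lam * Esubopt_anchor.
Proof.
move=> f_sc lam_gt0; rewrite /Edist /Esubopt_anchor -EidxZ.
apply: ler_Eidx => // idx; rewrite /epoch_iter addn0.
exact: strongly_convex_sqdist_le.
Qed.

Lemma stale_gap_le t idx : (t < m)%N ->
  sqnorm (fun j => epoch_iter idx t j - stale_iter t idx j)
  <= INR tau * rsum tau (fun i => INR (i < t)%N
       * sqnorm (fun j => epoch_iter idx (t - i)%N j - epoch_iter idx (t - i.+1)%N j)).
Proof.
move=> tm; have [delay_ge delay_le delay_tau] := delay_window idx tm.
set q := (k * m + t - delay t idx)%N.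
have := sqnorm_telescope_le (fun u => iter idx u) (leq_subr (delay t idx) (k * m + t)).
rewrite subKn // -/q => gap_le.
have q_le_t : (q <= t)%N by rewrite /q; lia.
apply: Rle_trans gap_le _.
rewrite (eq_rsum (G := fun i => INR (i < t)%N
  * sqnorm (fun j => epoch_iter idx (t - i)%N j - epoch_iter idx (t - i.+1)%N j))); last first.
  move=> i iq; have it : (i < t)%N by lia.
  rewrite it /= Rmult_1_l /epoch_iter.
  have -> : (k * m + t - i = k * m + (t - i))%N by lia.
  by have -> : (k * m + t - i.+1 = k * m + (t - i.+1))%N by lia.
have summand_ge0 : forall i, (i < tau)%N -> 0 <= INR (i < t)%N
    * sqnorm (fun j => epoch_iter idx (t - i)%N j - epoch_iter idx (t - i.+1)%N j).
  by move=> i _; apply: Rmult_le_pos; [exact: pos_INR | exact: sqnorm_ge0].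
apply: Rmult_le_compat; first exact: pos_INR.
- by apply: rsum_ge0 => i iq; apply: summand_ge0; lia.
- by apply/le_INR/leP.
- by apply: ler_rsum_range.
Qed.

Lemma Estale_le t : (t < m)%N ->
  Estale t <= INR tau * rsum tau (fun i => INR (i < t)%N * (eta ^ 2 * Edir (t - i.+1)%N)).
Proof.
move=> tm; apply: Rle_trans (ler_Eidx n_gt0 _ (fun idx => stale_gap_le idx tm)) _.
rewrite EidxZ Eidx_rsum; apply: Req_le; congr (_ * _); apply: eq_rsum => i _.
rewrite EidxZ; case: ltnP => it; rewrite [INR _]/=; last ring.
rewrite !Rmult_1_l -Eincrement_sq; last lia.
by rewrite (_ : t - i = (t - i.+1).+1)%N //; lia.
Qed.

Lemma Edist_succ t : (t.+1 < m)%N ->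
  Ek (fun idx => sqnorm (fun j => epoch_step t idx j - xstar j)) = Edist t.+1.
Proof. by move=> tm; apply: eq_Eidx => idx; rewrite epoch_iterS. Qed.

Lemma epoch_contraction : 0 <= Delta -> 0 < lam -> strongly_convex lam f ->
  2 * L ^ 2 * Delta * eta ^ 2 * INR tau ^ 2 < 1 ->
  let rho := 4 * L * ((eta + L * Delta * INR tau ^ 2 * eta ^ 2)
                      / (1 - 2 * L ^ 2 * Delta * eta ^ 2 * INR tau ^ 2)) in
  0 < 1 - rho ->
  / INR m * rsum m Esubopt <= (/ (lam * eta * INR m) + rho) / (1 - rho) * Esubopt_anchor.
Proof.
move=> Delta_ge0 lam_gt0 f_sc c_lt1 rho rho_lt1.
apply: (epoch_rate_algebra L_gt0 Delta_ge0 eta_gt0 lam_gt0 (INR_gt0 m_gt0) _ c_lt1 rho_lt1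
  (Su := rsum m Edir) (Ss := rsum m Estale) (r0 := Edist 0)).
- by apply: rsum_ge0 => t _; exact: Edir_ge0.
- apply: Rle_trans (ler_rsum (fun t _ => Edir_le t)) _.
  by rewrite !rsumD !rsumZ rsum_const; right.
- apply: Rle_trans (ler_rsum (fun t tm => Estale_le tm)) _.
  rewrite rsumZ Rmult_assoc; apply: Rmult_le_compat_l; first exact: pos_INR.
  rewrite (eq_rsum (G := fun t => eta ^ 2 * rsum tau (fun i => INR (i < t)%N * Edir (t - i.+1)%N))).
    rewrite rsumZ; apply: Rmult_le_compat_l; first exact: pow2_ge_0.
    by apply: rsum_window_le => s _; exact: Edir_ge0.
  by move=> t _; rewrite -rsumZ; apply: eq_rsum => i _; ring.
- rewrite -!rsumZ -!rsumB; apply: rsum_telescope_le => // [t tm | ].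
    by rewrite -Edist_succ //; have := Edist_step_le (ltnW tm); lra.
  have := Edist_step_le (t := m.-1) ltac:(lia).
  have : 0 <= Ek (fun idx => sqnorm (fun j => epoch_step m.-1 idx j - xstar j)).
    by apply: Eidx_ge0 => // idx; exact: sqnorm_ge0.
  lra.
- exact: Edist0_le.
Qed.
End Epoch.
End FiniteSum.

Lemma dim_gt0_of_sparsity_const_min d n (e : nat -> 'I_d -> bool) Delta :
  (forall Delta', (forall x, / INR n * rsum n (fun i => sqnorm_on (e i) x) <= Delta' * sqnorm x)
     -> Delta <= Delta') -> (0 < d)%N.
Proof.
(* in dimension 0 every constant bounds the sparsity, so there is no least one *)
case: d e => // e Delta_min; exfalso.
suff : Delta <= Delta - 1 by lra.
apply: Delta_min => x; rewrite [sqnorm x]big_ord0.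
rewrite (eq_rsum (G := fun _ => 0)) ?rsum_const => [|i _]; last exact: big_ord0.
lra.
Qed.

Section Snapshot.
Variables (d n m : nat) (gs : nat -> vec d -> vec d) (eta : R)
  (D : nat -> seq nat -> seq nat -> nat) (x0 : vec d) (p : nat -> R).
Hypothesis m_gt0 : (0 < m)%N.
Local Notation iter := (svrg_iter n m gs eta D x0).
Local Notation snap := (snapshot n m gs eta D x0).

Lemma snapshot_succ_upd idx sel k s : (s < m)%N ->
  snap idx (upd sel k s) k.+1 = iter idx sel (k * m + s).
Proof.
move=> sm; have km : (k.+1 * m = (k * m + m.-1).+1)%N by rewrite mulSn; lia.
rewrite /snapshot -/(iter idx (upd sel k s) (k.+1 * m)) km svrg_iterS /svrg_step.
rewrite divnMDl // divn_small ?addn0; last lia.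
rewrite -km modnMl eqxx upd_eq nth_svrg_traj; last lia.
rewrite /svrg_iter (svrg_traj_sel_eq _ _ _ _ _ m_gt0 _ (sel' := sel) (k := k)) // => [j jk|].
  by apply: upd_neq; lia.
lia.
Qed.

Lemma Exp_snapshot_succ (G : vec d -> R) k : (forall s, (s < m)%N -> p s = / INR m) ->
  Exp n m p k.+1 (fun idx sel => G (snap idx sel k.+1))
  = Esel m p k (fun sel => / INR m
      * rsum m (fun s => Eidx n (k * m + m) (fun idx => G (iter idx sel (k * m + s))))).
Proof.
move=> p_unif; rewrite /Exp /= EselZ Esel_rsum -rsumZ; apply: eq_rsum => s sm.
rewrite p_unif // -EselZ -[in RHS]EselZ; apply: eq_Esel => sel.
rewrite (_ : k.+1 * m = k * m + m)%N; last by rewrite mulSn addnC.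
by congr (_ * _); apply: eq_Eidx => idx; rewrite snapshot_succ_upd.
Qed.

Lemma Exp_snapshot (G : vec d -> R) k : (0 < n)%N ->
  Exp n m p k (fun idx sel => G (snap idx sel k))
  = Esel m p k (fun sel => Eidx n (k * m + m) (fun idx => G (iter idx sel (k * m)))).
Proof.
move=> n_gt0; apply: eq_Esel => sel; rewrite (Eidx_widen n_gt0 (T := k * m)) ?leq_addr //.
by move=> idx idx' idx_eq; rewrite /svrg_iter (@svrg_traj_idx_eq _ n m gs eta D x0 idx idx').
Qed.
End Snapshot.

Theorem theorem2
  (d n m tau : nat) (fs : nat -> vec d -> R) (gs : nat -> vec d -> vec d)
  (e : nat -> 'I_d -> bool) (L lam Delta eta : R) (xstar x0 : vec d)
  (p : nat -> R) (D : nat -> seq nat -> seq nat -> nat) :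
  (0 < n)%N -> (0 < m)%N ->
  (forall i, (i < n)%N -> convex (fs i)) ->
  (forall i, (i < n)%N -> has_gradient (fs i) (gs i)) ->
  (forall i, (i < n)%N -> lipschitz_grad L (gs i)) ->
  0 < lam -> strongly_convex lam (favg n fs) ->
  (forall x, favg n fs xstar <= favg n fs x) ->
  (forall i, (i < n)%N -> depends_only_on (e i) (fs i)) ->
  (forall x, / INR n * rsum n (fun i => sqnorm_on (e i) x) <= Delta * sqnorm x) ->
  (forall Delta', (forall x, / INR n * rsum n (fun i => sqnorm_on (e i) x)
                              <= Delta' * sqnorm x) -> Delta <= Delta') ->
  (forall t hi hs, (t %/ m * m <= D t hi hs)%N /\ (D t hi hs <= t)%N
                   /\ (t - D t hi hs <= tau)%N) ->
  0 < eta ->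
  2 * L ^ 2 * Delta * eta ^ 2 * INR tau ^ 2 < 1 ->
  let rho := 4 * L * ((eta + L * Delta * INR tau ^ 2 * eta ^ 2)
                      / (1 - 2 * L ^ 2 * Delta * eta ^ 2 * INR tau ^ 2)) in
  0 < 1 - rho ->
  let theta := (/ (lam * eta * INR m) + rho) / (1 - rho) in
  0 < theta < 1 ->
  (forall j, (j < m)%N -> p j = / INR m) ->
  forall k : nat,
    Exp n m p k.+1 (fun idx sel =>
      favg n fs (snapshot n m gs eta D x0 idx sel k.+1) - favg n fs xstar)
    <= theta * Exp n m p k (fun idx sel =>
      favg n fs (snapshot n m gs eta D x0 idx sel k) - favg n fs xstar).
Proof.
move=> n_gt0 m_gt0 fs_convex fs_grad gs_lipschitz lam_gt0 f_sc xstar_min fs_sparse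
  Delta_sparse Delta_min D_window eta_gt0 c_lt1 rho rho_lt1 theta _ p_unif k.
have d_gt0 := dim_gt0_of_sparsity_const_min Delta_min.
have L_gt0 := lipschitz_const_gt0 d_gt0 n_gt0 fs_convex fs_grad gs_lipschitz lam_gt0 f_sc.
have Delta_ge0 := sparsity_const_ge0 d_gt0 n_gt0 Delta_sparse.
have p_ge0 : forall s, (s < m)%N -> 0 <= p s.
  by move=> s sm; rewrite p_unif //; apply/Rlt_le/Rinv_0_lt_compat/INR_gt0.
pose F x := favg n fs x - favg n fs xstar.
rewrite (Exp_snapshot_succ n gs eta D x0 m_gt0 F) // (Exp_snapshot m gs eta D x0 p F) //.
rewrite -EselZ; apply: ler_Esel => // sel.
exact: (epoch_contraction n_gt0 fs_convex fs_grad gs_lipschitz L_gt0 xstar_min fs_sparse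
  Delta_sparse x0 sel k m_gt0 D_window eta_gt0 Delta_ge0 lam_gt0 f_sc c_lt1 rho_lt1).
Qed.
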